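(* Let $\gamma,\sigma:[a,b]\to V$ be continuous paths of bounded variation and let $\phi:\mathbb{N}\cup\{0\}\to\mathbb{R}$ be such that $\sum_kC^k|\phi(k)|(k!)^{-2}<\infty$ for every $C>0$. Then the truncated kernel $K_\phi^{(N)}(s,t)$ converges to $K_\phi^{\gamma,\sigma}(s,t)$ as $N\to\infty$, and \[ \left|K_\phi^{\gamma,\sigma}(s,t)-K_\phi^{(N)}(s,t)\right|\le\sum_{k=N+1}^\infty|\phi(k)|\,\frac{(L_s(\gamma)L_t(\sigma))^k}{(k!)^2}. \]
   Context: $V$ is a finite-dimensional real inner product space, $\langle\cdot,\cdot\rangle_k$ the induced Hilbert–Schmidt inner product on $V^{\otimes k}$. Signature: $S(\gamma)^0=1$, $S(\gamma)^k_{s,t}=\int_{s<u_1<\dots<u_k<t}d\gamma_{u_1}\otimes\cdots\otimes d\gamma_{u_k}$. $K_\phi^{\gamma,\sigma}(s,t)=\sum_{k\ge0}\phi(k)\langle S(\gamma)^k_{a,s},S(\sigma)^k_{a,t}\rangle_k$ and $K_\phi^{(N)}(s,t)=\sum_{k=0}^N\phi(k)\langle S(\gamma)^k_{a,s},S(\sigma)^k_{a,t}\rangle_k$. $L_s(\gamma)$ is the length (1-variation) of $\gamma|_{[a,s]}$. *)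

(* R : realType, V = R^d (Euclidean) *)
From mathcomp Require Import all_boot all_order all_algebra.
From mathcomp Require Import all_classical all_reals all_analysis.
Set Implicit Arguments. Unset Strict Implicit. Unset Printing Implicit Defensive.
Import Order.TTheory GRing.Theory Num.Theory.
Import numFieldNormedType.Exports.
Local Open Scope classical_set_scope.
Local Open Scope ring_scope.

Section Sig.
Variables (R : realType) (d : nat).

Definition enorm (v : 'rV[R]_d) : R := Num.sqrt (\sum_(i < d) v ord0 i ^+ 2).

Definition is_RS (f g : R -> R) (s t I : R) : Prop :=
  forall e : R, 0 < e -> exists2 del : R, 0 < del &
    forall (n : nat) (x xi : nat -> R),
      x 0%N = s -> x n = t ->
      (forall i, (i < n)%N -> x i <= xi i <= x i.+1) ->
      (forall i, (i < n)%N -> x i.+1 - x i < del) ->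
      `| \sum_(i < n) f (xi i) * (g (x i.+1) - g (x i)) - I | < e.

(* the RS integral (its value when it exists, 0 otherwise) *)
Definition RSint (f g : R -> R) (s t : R) : R := xget 0 (is_RS f g s t).

(* Signature coordinates: for a word w = i_1 ... i_k,
   S(gamma)^w_{a,s} = int_{a<u_1<...<u_k<s} dgamma^{i_1}_{u_1} ... dgamma^{i_k}_{u_k},
   defined as iterated RS integrals:  S^{w i}_{a,s} = int_a^s S^w_{a,u} dgamma^i(u).
   [sig_rev] takes the reversed word. *)
Fixpoint sig_rev (gam : R -> 'rV[R]_d) (a : R) (rw : seq 'I_d) (s : R) : R :=
  match rw with
  | [::] => 1
  | i :: rw' => RSint (sig_rev gam a rw') (fun u => gam u ord0 i) a s
  end.

Definition sigw (gam : R -> 'rV[R]_d) (a : R) (w : seq 'I_d) (s : R) : R :=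
  sig_rev gam a (rev w) s.

(* Hilbert--Schmidt inner product <S(gamma)^k_{a,s}, S(sigma)^k_{a,t}>_k on V^{(x)k}
   in the orthonormal basis e_{i_1} (x) ... (x) e_{i_k} *)
Definition sig_inner (gam sig : R -> 'rV[R]_d) (a : R) (k : nat) (s t : R) : R :=
  \sum_(w : k.-tuple 'I_d) sigw gam a w s * sigw sig a w t.

Definition KN (phi : nat -> R) (gam sig : R -> 'rV[R]_d) (a : R) (N : nat) (s t : R) : R :=
  \sum_(k < N.+1) phi k * sig_inner gam sig a k s t.

Definition Kphi (phi : nat -> R) (gam sig : R -> 'rV[R]_d) (a : R) (s t : R) : R :=
  limn (fun N => KN phi gam sig a N s t).

Definition path_variations (gam : R -> 'rV[R]_d) (a s : R) : set R :=
  [set r | exists n (x : nat -> R), [/\ x 0%N = a, x n = s,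
       (forall i, (i < n)%N -> x i <= x i.+1) &
       r = \sum_(i < n) enorm (gam (x i.+1) - gam (x i))]].

Definition bounded_var (gam : R -> 'rV[R]_d) (a b : R) : Prop :=
  has_ubound (path_variations gam a b).

Definition path_length (gam : R -> 'rV[R]_d) (a s : R) : R :=
  sup (path_variations gam a s).

End Sig.

From mathcomp Require Import all_boot all_order all_algebra.
From mathcomp Require Import all_classical all_reals all_analysis.
From mathcomp Require Import ring.
Import Order.TTheory GRing.Theory Num.Theory.
Import numFieldNormedType.Exports.
Local Open Scope classical_set_scope.
Local Open Scope ring_scope.
Set Implicit Arguments. Unset Strict Implicit. Unset Printing Implicit Defensive.

(* The level-k signature of a path of length L has Hilbert-Schmidt norm at
   most L^k / k!.  By induction on k: a Riemann-Stieltjes sum for level k+1 is a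
   sum of tensor products of level-k terms with increments of the path, so its
   norm is at most sum_j (L(x_{j+1}) - L(x_j)) L(x_j)^k / k!, a lower sum for
   the integral of L^k / k! dL = L^{k+1} / (k+1)!; the integral itself is a limit
   of such sums.  By Cauchy-Schwarz the k-th term of the kernel is then at most
   |phi k| (L_s L_t)^k / (k!)^2, and the hypothesis on phi makes these bounds a
   convergent dominating series, whose tails give the estimate. *)

Section L2norm.
Variables (R : rcfType) (T : finType).
Implicit Types f g : T -> R.

Definition l2norm f : R := Num.sqrt (\sum_i f i ^+ 2).

Lemma sumr_sqr_ge0 f : 0 <= \sum_i f i ^+ 2.
Proof. by apply: sumr_ge0 => i _; exact: sqr_ge0. Qed.

Lemma l2norm_ge0 f : 0 <= l2norm f.
Proof. exact: sqrtr_ge0. Qed.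

Lemma sqr_l2norm f : l2norm f ^+ 2 = \sum_i f i ^+ 2.
Proof. by rewrite sqr_sqrtr // sumr_sqr_ge0. Qed.

(* Lagrange's identity: the defect in Cauchy-Schwarz is a sum of squares. *)
Lemma CauchySchwarz_sum f g :
  (\sum_i f i * g i) ^+ 2 <= (\sum_i f i ^+ 2) * (\sum_i g i ^+ 2).
Proof.
have lagrange : \sum_i \sum_j (f i * g j - f j * g i) ^+ 2 =
    (\sum_i f i ^+ 2) * (\sum_i g i ^+ 2) *+ 2 - (\sum_i f i * g i) ^+ 2 *+ 2.
  transitivity (\sum_i \sum_j (f i ^+ 2 * g j ^+ 2 + f j ^+ 2 * g i ^+ 2
                               - (f i * g i) * (f j * g j) *+ 2)).
    by apply: eq_bigr => i _; apply: eq_bigr => j _; ring.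
  under eq_bigr => i _ do rewrite !big_split /= sumrN.
  have sum_sqr_prod : \sum_i \sum_j f i ^+ 2 * g j ^+ 2 =
      (\sum_i f i ^+ 2) * (\sum_i g i ^+ 2).
    by rewrite mulr_suml; apply: eq_bigr => i _; rewrite mulr_sumr.
  have sqr_sum : \sum_i \sum_j (f i * g i) * (f j * g j) *+ 2 =
      (\sum_i f i * g i) ^+ 2 *+ 2.
    rewrite expr2 mulr_suml -sumrMnl; apply: eq_bigr => i _.
    by rewrite mulr_sumr -sumrMnl.
  by rewrite !big_split /= sumrN [X in _ + X - _]exchange_big /= sum_sqr_prod sqr_sum.
have : 0 <= \sum_i \sum_j (f i * g j - f j * g i) ^+ 2.
  by apply: sumr_ge0 => i _; apply: sumr_ge0 => j _; exact: sqr_ge0.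
by rewrite lagrange subr_ge0 lerMn2r.
Qed.

Lemma CauchySchwarz_l2norm f g : `|\sum_i f i * g i| <= l2norm f * l2norm g.
Proof.
rewrite -ler_sqr ?nnegrE ?mulr_ge0 ?l2norm_ge0 //.
by rewrite exprMn !sqr_l2norm real_normK ?num_real // CauchySchwarz_sum.
Qed.

Lemma ler_l2norm f g : (forall i, `|f i| <= g i) -> l2norm f <= l2norm g.
Proof.
move=> fg; apply: ler_wsqrtr; apply: ler_sum => i _.
have g0 : 0 <= g i by apply: le_trans (fg i).
by rewrite -real_normK ?num_real // lerXn2r // nnegrE.
Qed.

Lemma l2norm_abs f : l2norm (fun i => `|f i|) = l2norm f.
Proof. by congr Num.sqrt; apply: eq_bigr => i _; rewrite real_normK ?num_real. Qed.

Lemma ler_l2normD f g : l2norm (fun i => f i + g i) <= l2norm f + l2norm g.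
Proof.
rewrite -ler_sqr ?nnegrE ?addr_ge0 ?l2norm_ge0 //.
rewrite sqr_l2norm sqrrD !sqr_l2norm.
under eq_bigr => i _ do rewrite sqrrD.
rewrite !big_split /= -mulr2n lerD2r lerD2l lerMn2r /=.
exact: le_trans (ler_norm _) (CauchySchwarz_l2norm f g).
Qed.

Lemma ler_l2norm_sum n (F : nat -> T -> R) :
  l2norm (fun i => \sum_(j < n) F j i) <= \sum_(j < n) l2norm (F j).
Proof.
elim: n => [|n IH].
  by rewrite big_ord0 /l2norm big1 ?sqrtr0 // => i _; rewrite big_ord0 expr0n.
rewrite big_ord_recr /=; under eq_fun => i do rewrite big_ord_recr /=.
exact: le_trans (ler_l2normD _ _) (lerD IH _).
Qed.

Lemma l2norm_cst (c : R) : l2norm (fun _ => c) = Num.sqrt #|T|%:R * `|c|.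
Proof. by rewrite /l2norm sumr_const -(mulr_natl (c ^+ 2)) sqrtrM // sqrtr_sqr. Qed.

End L2norm.

Lemma l2norm_reindex (R : rcfType) (T T' : finType) (h : T' -> T) (f : T -> R) :
  bijective h -> l2norm (fun i => f (h i)) = l2norm f.
Proof. by move=> hb; rewrite /l2norm [in RHS](reindex h (onW_bij _ hb)). Qed.

Lemma l2norm_mul_pair (R : rcfType) (T1 T2 : finType)
    (f : T1 -> R) (g : T2 -> R) :
  l2norm (fun p : T1 * T2 => f p.1 * g p.2) = l2norm f * l2norm g.
Proof.
rewrite /l2norm -sqrtrM ?sumr_sqr_ge0 //; congr Num.sqrt.
rewrite -(pair_big xpredT xpredT (fun i j => (f i * g j) ^+ 2)) /= mulr_suml.
by apply: eq_bigr => i _; rewrite mulr_sumr; apply: eq_bigr => j _; rewrite exprMn.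
Qed.

Section PathLength.
Variables (R : realType) (d : nat) (gam : R -> 'rV[R]_d) (a : R).
Local Notation L := (path_length gam a).

Lemma enorm_ge0 (v : 'rV[R]_d) : 0 <= enorm v.
Proof. exact: sqrtr_ge0. Qed.

Lemma path_variations_ge0 s r : path_variations gam a s r -> 0 <= r.
Proof. by move=> [n [x [_ _ _ ->]]]; apply: sumr_ge0 => i _; exact: enorm_ge0. Qed.

Lemma path_variations_snoc s t r : s <= t -> path_variations gam a s r ->
  path_variations gam a t (r + enorm (gam t - gam s)).
Proof.
move=> st [n [x [x0 xn xmono ->]]].
exists n.+1, (fun i => if (i <= n)%N then x i else t); split => //.
- by rewrite ltnn.
- move=> i; rewrite ltnS => ilen; rewrite ilen.
  by case: ltnP => [/xmono //| ni]; rewrite (@anti_leq i n) ?ilen ?xn.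
- rewrite big_ord_recr /= ltnn leqnn xn; congr (_ + _).
  by apply: eq_bigr => -[i ilt] _ /=; rewrite ilt (ltnW ilt).
Qed.

Lemma path_variations_neq0 s : a <= s -> path_variations gam a s !=set0.
Proof.
move=> as_; exists (0 + enorm (gam s - gam a)); apply: path_variations_snoc => //.
by exists 0%N, (fun _ => a); split => //; rewrite big_ord0.
Qed.

Variable b : R.
Hypothesis bv : bounded_var gam a b.

Lemma path_variations_ubound s : s <= b -> has_ubound (path_variations gam a s).
Proof.
move=> sb; case: bv => M M_ub; exists M => r var_r.
apply: le_trans (M_ub _ (path_variations_snoc sb var_r)).
by rewrite lerDl enorm_ge0.
Qed.

Lemma path_length_ge0 s : a <= s -> s <= b -> 0 <= L s.
Proof.
move=> as_ sb; have [r var_r] := path_variations_neq0 as_.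
apply: le_trans (path_variations_ge0 var_r) (sup_upper_bound _ var_r).
by split; [exact: path_variations_neq0 | exact: path_variations_ubound].
Qed.

Lemma path_length_snoc s t : a <= s -> s <= t -> t <= b ->
  L s + enorm (gam t - gam s) <= L t.
Proof.
move=> as_ st tb; rewrite -lerBrDr; apply: ge_sup; first exact: path_variations_neq0.
move=> r var_r; rewrite lerBrDr.
apply: sup_upper_bound (path_variations_snoc st var_r); split.
  exact/path_variations_neq0/(le_trans as_ st).
exact: path_variations_ubound.
Qed.

End PathLength.

Section RiemannStieltjesSums.
Variable R : realType.
Implicit Types (f g : R -> R) (a u : R).

Definition RSsum f g (x : nat -> R) n := \sum_(j < n) f (x j) * (g (x j.+1) - g (x j)).

(* [n.+1] pieces, so that the mesh [(u - a) / n.+1] never divides by zero. *)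
Definition unif_part a u n (j : nat) := a + (u - a) * (j%:R / n.+1%:R).

Lemma unif_part0 a u n : unif_part a u n 0 = a.
Proof. by rewrite /unif_part mul0r mulr0 addr0. Qed.

Lemma unif_partS a u n : unif_part a u n n.+1 = u.
Proof. by rewrite /unif_part divff ?pnatr_eq0 // mulr1 addrC subrK. Qed.

Lemma unif_part_step a u n j :
  unif_part a u n j.+1 - unif_part a u n j = (u - a) / n.+1%:R.
Proof. by rewrite /unif_part -natr1; field; rewrite addrC natr1 pnatr_eq0. Qed.

Lemma unif_part_le a u n i j : a <= u -> (i <= j)%N ->
  unif_part a u n i <= unif_part a u n j.
Proof.
move=> au ij; rewrite /unif_part lerD2l ler_wpM2l ?subr_ge0 //.
by rewrite ler_pM2r ?invr_gt0 ?ltr0n // ler_nat.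
Qed.

Lemma unif_part_itv a u n j : a <= u -> (j <= n.+1)%N ->
  a <= unif_part a u n j <= u.
Proof.
move=> au jn; rewrite /unif_part lerDl mulr_ge0 ?divr_ge0 ?subr_ge0 //=.
by rewrite -lerBrDl ler_piMr ?subr_ge0 // ler_pdivrMr ?ltr0n // mul1r ler_nat.
Qed.

Lemma RSsum_unif_cvg f g a u I : a <= u -> is_RS f g a u I ->
  RSsum f g (unif_part a u n) n.+1 @[n --> \oo] --> I.
Proof.
move=> au RS_I; apply/cvgrPdist_lt => e e0; have [del del0 RS_del] := RS_I e e0.
near=> n; rewrite distrC; apply: RS_del.
- exact: unif_part0.
- exact: unif_partS.
- by move=> j _; rewrite lexx unif_part_le.
- move=> j _; rewrite unif_part_step ltr_pdivrMr ?ltr0n // mulrC -ltr_pdivrMr //.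
  apply: lt_le_trans (_ : n%:R <= n.+1%:R); last by rewrite ler_nat.
  by near: n; exact: nbhs_infty_gtr.
Unshelve. all: by end_near. Qed.

Lemma RSint_near_le f g a u e : a <= u -> 0 < e ->
  \forall n \near \oo, `|RSint f g a u| <= `|RSsum f g (unif_part a u n) n.+1| + e.
Proof.
move=> au e0; have [[I RS_I]|noRS] := pselect (exists I, is_RS f g a u I); last first.
  apply: nearW => n; rewrite /RSint xgetPN => [|I RS_I]; last by apply: noRS; exists I.
  by rewrite normr0 addr_ge0 // ltW.
have /cvgrPdist_lt/(_ e e0) := RSsum_unif_cvg au (xgetPex 0 (ex_intro _ I RS_I)).
apply: filterS => n /ltW dist_le; rewrite -lerBlDl.
exact: le_trans (lerB_dist _ _) dist_le.
Qed.

End RiemannStieltjesSums.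

Section PowerSums.
Variable R : realFieldType.

Lemma ler_incr_pow_fact (x y : R) k : 0 <= x <= y ->
  (y - x) * (x ^+ k / k`!%:R) <= (y ^+ k.+1 - x ^+ k.+1) / k.+1`!%:R.
Proof.
move=> /andP[x0 xy].
have incr_pow : (y - x) * x ^+ k * k.+1%:R <= y ^+ k.+1 - x ^+ k.+1.
  rewrite subrXX /= -mulrA ler_wpM2l ?subr_ge0 //.
  have -> : k.+1%:R = \sum_(i < k.+1) (1 : R) by rewrite sumr_const card_ord.
  rewrite mulr_sumr; apply: ler_sum => i _.
  have ik : (i <= k)%N by rewrite -ltnS ltn_ord.
  rewrite mulr1 -{1}(subnK ik) exprD ler_wpM2r ?exprn_ge0 //.
  by rewrite lerXn2r // nnegrE (le_trans x0).
have -> : (y - x) * (x ^+ k / k`!%:R) = (y - x) * x ^+ k * k.+1%:R / k.+1`!%:R.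
  by rewrite factS natrM; field; rewrite pnatr_eq0 -lt0n fact_gt0 addrC natr1 pnatr_eq0.
by rewrite ler_wpM2r ?invr_ge0 ?ler0n.
Qed.

Lemma ler_sum_incr_pow_fact (y : nat -> R) n k :
  (forall j, (j < n)%N -> 0 <= y j <= y j.+1) ->
  \sum_(j < n) (y j.+1 - y j) * (y j ^+ k / k`!%:R)
    <= (y n ^+ k.+1 - y 0%N ^+ k.+1) / k.+1`!%:R.
Proof.
move=> ymono; apply: le_trans (_ : \sum_(j < n)
    (y j.+1 ^+ k.+1 - y j ^+ k.+1) / k.+1`!%:R <= _).
  by apply: ler_sum => j _; apply: ler_incr_pow_fact; exact: ymono.
rewrite -mulr_suml -(big_mkord xpredT (fun j => y j.+1 ^+ k.+1 - y j ^+ k.+1)).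
by rewrite telescope_sumr.
Qed.

End PowerSums.

Lemma cons_tuple_bij (T : Type) k :
  bijective (fun p : T * k.-tuple T => [tuple of p.1 :: p.2]).
Proof.
exists (fun w : k.+1.-tuple T => (thead w, [tuple of behead w])).
  by move=> [i w]; congr pair; apply: val_inj.
by move=> w; rewrite [RHS]tuple_eta.
Qed.

Section SignatureNorm.
Variables (R : realType) (d : nat) (gam : R -> 'rV[R]_d) (a : R).
Local Notation L := (path_length gam a).
Local Notation coord i := (fun u => gam u ord0 i).

Definition sig_norm k u := l2norm (fun w : k.-tuple 'I_d => sig_rev gam a w u).

Lemma enormE (v : 'rV[R]_d) : enorm v = l2norm (fun i => v ord0 i).
Proof. by []. Qed.

Lemma sig_norm0 u : sig_norm 0 u = 1.
Proof.
rewrite /sig_norm (_ : (fun w : 0.-tuple 'I_d => _) = fun=> 1); last first.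
  by apply: funext => w; rewrite tuple0.
by rewrite l2norm_cst card_tuple expn0 sqrtr1 normr1 mulr1.
Qed.

Lemma sig_normS k u : sig_norm k.+1 u =
  l2norm (fun p : 'I_d * k.-tuple 'I_d => RSint (sig_rev gam a p.2) (coord p.1) a u).
Proof. by rewrite /sig_norm -(l2norm_reindex _ (cons_tuple_bij _ k)). Qed.

Lemma l2norm_sigw k u :
  l2norm (fun w : k.-tuple 'I_d => sigw gam a w u) = sig_norm k u.
Proof.
have rev_bij : bijective (fun w : k.-tuple 'I_d => [tuple of rev w]).
  apply: inj_card_bij => // w1 w2 /(congr1 val) /= /(congr1 rev).
  by rewrite !revK => /val_inj.
by rewrite /sig_norm -[RHS](l2norm_reindex _ rev_bij).
Qed.

Lemma l2norm_RSterm_sig k s t :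
  l2norm (fun p : 'I_d * k.-tuple 'I_d =>
            sig_rev gam a p.2 s * (gam t ord0 p.1 - gam s ord0 p.1))
    = enorm (gam t - gam s) * sig_norm k s.
Proof.
rewrite enormE /sig_norm -l2norm_mul_pair.
by congr l2norm; apply/funext => -[i w] /=; rewrite !mxE mulrC.
Qed.

Lemma l2norm_RSsum_sig k x n :
  l2norm (fun p : 'I_d * k.-tuple 'I_d => RSsum (sig_rev gam a p.2) (coord p.1) x n)
    <= \sum_(j < n) enorm (gam (x j.+1) - gam (x j)) * sig_norm k (x j).
Proof.
apply: le_trans (ler_l2norm_sum n (fun j (p : 'I_d * k.-tuple 'I_d) =>
  sig_rev gam a p.2 (x j) * (gam (x j.+1) ord0 p.1 - gam (x j) ord0 p.1))) _.
by apply: ler_sum => j _; rewrite l2norm_RSterm_sig.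
Qed.

Variable b : R.
Hypothesis bv : bounded_var gam a b.

Lemma RSsum_sig_le k u x n : a <= u -> u <= b ->
  (forall t, a <= t -> t <= u -> sig_norm k t <= L t ^+ k / k`!%:R) ->
  x 0%N = a -> x n = u ->
  (forall j, (j < n)%N -> [/\ a <= x j, x j <= x j.+1 & x j.+1 <= u]) ->
  l2norm (fun p : 'I_d * k.-tuple 'I_d => RSsum (sig_rev gam a p.2) (coord p.1) x n)
    <= L u ^+ k.+1 / k.+1`!%:R.
Proof.
move=> au ub sig_le x0 xn xmono; apply: le_trans (l2norm_RSsum_sig k x n) _.
have L_incr j : (j < n)%N ->
    L (x j) + enorm (gam (x j.+1) - gam (x j)) <= L (x j.+1).
  by move=> /xmono[aj jj1 j1u]; exact: (path_length_snoc bv aj jj1 (le_trans j1u ub)).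
apply: le_trans (_ : \sum_(j < n) (L (x j.+1) - L (x j)) * (L (x j) ^+ k / k`!%:R)
                     <= _).
  apply: ler_sum => -[j jn] _ /=; have [aj jj1 j1u] := xmono j jn.
  apply: ler_pM; [exact: enorm_ge0 | exact: l2norm_ge0 | | ].
    by rewrite lerBrDl; exact: L_incr.
  by apply: sig_le; rewrite // (le_trans jj1 j1u).
apply: le_trans (@ler_sum_incr_pow_fact _ (fun j => L (x j)) n k _) _.
  move=> j jn; have [aj jj1 j1u] := xmono j jn.
  rewrite (path_length_ge0 bv aj) ?(le_trans jj1 (le_trans j1u ub)) //=.
  by apply: le_trans (L_incr j jn); rewrite lerDl enorm_ge0.
rewrite xn x0 ler_wpM2r ?invr_ge0 ?ler0n // gerBl exprn_ge0 //.
by rewrite (path_length_ge0 bv) // (le_trans au ub).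
Qed.

Lemma sig_norm_le k u : a <= u -> u <= b -> sig_norm k u <= L u ^+ k / k`!%:R.
Proof.
elim: k u => [|k IH] u au ub; first by rewrite sig_norm0 expr0 fact0 divr1.
rewrite sig_normS; apply/ler_addgt0Pr => e e0.
pose e' := e / (Num.sqrt #|{: 'I_d * k.-tuple 'I_d}|%:R + 1).
have e'0 : 0 < e' by rewrite divr_gt0 // ltr_wpDl ?sqrtr_ge0.
have [n RSint_le] := filter_ex (filter_forall _ (fun p : 'I_d * k.-tuple 'I_d =>
  RSint_near_le (sig_rev gam a p.2) (coord p.1) au e'0)).
apply: le_trans (ler_l2norm RSint_le) _.
apply: le_trans (ler_l2normD _ _) _; rewrite l2norm_abs l2norm_cst.
apply: lerD.
  apply: RSsum_sig_le => //; first by move=> t at_ tu; apply: IH (le_trans tu ub).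
  - exact: unif_part0.
  - exact: unif_partS.
  move=> j jn; have /andP[aj _] := unif_part_itv au (ltnW jn).
  by have /andP[_ j1u] := unif_part_itv au jn; split; rewrite // unif_part_le.
rewrite gtr0_norm // /e' mulrA ler_pdivrMr ?ltr_wpDl ?sqrtr_ge0 //.
by rewrite mulrC ler_wpM2l ?ltW //; exact: ltr_pwDr ltr01 (lexx _).
Qed.

End SignatureNorm.

Lemma sig_inner_le (R : realType) (d : nat) (a b : R) (gam sig : R -> 'rV[R]_d)
    k s t : bounded_var gam a b -> bounded_var sig a b ->
  a <= s -> s <= b -> a <= t -> t <= b ->
  `|sig_inner gam sig a k s t| <=
    (path_length gam a s * path_length sig a t) ^+ k / (k`!%:R) ^+ 2.
Proof.
move=> bg bs as_ sb at_ tb; apply: le_trans (CauchySchwarz_l2norm _ _) _.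
rewrite !l2norm_sigw exprMn expr2 invfM mulrACA.
by apply: ler_pM; rewrite ?l2norm_ge0 ?(sig_norm_le bg) ?(sig_norm_le bs).
Qed.

Section DominatedSeries.
Variable R : realType.
Implicit Types u w : R ^nat.

Lemma cvg_series_tail u N : cvgn (series u) ->
  (fun M => \sum_(N <= k < M) u k) @ \oo --> limn (series u) - series u N.
Proof.
move=> cu; have : (fun M => series u M - series u N) @ \oo -->
    limn (series u) - series u N by exact: cvgB cu (cvg_cst _).
apply: cvg_trans; apply: near_eq_cvg; near=> M; rewrite sub_series_geq //.
by near: M; exact: nbhs_infty_ge.
Unshelve. all: by end_near. Qed.

Lemma series_dominated_tail u w : (forall k, `|u k| <= w k) -> cvgn (series w) ->
  cvgn (series u) /\ forall N,
    `|limn (series u) - series u N| <= limn (fun M => \sum_(N <= k < M) w k).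
Proof.
move=> uw cw; have w0 k : 0 <= w k by apply: le_trans (uw k).
have cu : cvgn (series u).
  by apply/normed_cvg/(series_le_cvg (fun k => normr_ge0 _) w0 uw).
split => // N; have tail_u := cvg_series_tail (N := N) cu.
have tail_w := cvg_series_tail (N := N) cw.
rewrite (cvg_lim _ tail_w) //; apply: ler_cvg_to (cvg_norm tail_u) tail_w _.
by apply: nearW => M; apply: le_trans (ler_norm_sum _ _ _) (ler_sum _ _).
Qed.

End DominatedSeries.

Lemma cvgn_series_weight (R : realType) (phi : nat -> R) (C : R) :
  (forall C : R, 0 < C ->
     cvgn (series (fun k => C ^+ k * `|phi k| / (k`!%:R) ^+ 2))) ->
  0 <= C -> cvgn (series (fun k => `|phi k| * C ^+ k / (k`!%:R) ^+ 2)).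
Proof.
move=> phi_cvg C0; have fact_ge0 k : 0 <= ((k`!%:R : R) ^+ 2)^-1.
  by rewrite invr_ge0 exprn_ge0.
apply: series_le_cvg _ _ _ (phi_cvg (C + 1) (ltr_wpDl C0 ltr01)) => k.
- by rewrite mulr_ge0 ?mulr_ge0 ?exprn_ge0.
- by rewrite mulr_ge0 ?mulr_ge0 ?exprn_ge0 ?addr_ge0.
- by rewrite ler_wpM2r // mulrC ler_wpM2r // lerXn2r ?nnegrE ?addr_ge0 ?lerDl.
Qed.

Unset Implicit Arguments.

Theorem mainTheorem5 (R : realType) (d : nat) (a b : R)
    (gam sig : R -> 'rV[R]_d) (phi : nat -> R) :
  a <= b ->
  {within `[a, b], continuous gam} ->
  {within `[a, b], continuous sig} ->
  bounded_var gam a b -> bounded_var sig a b ->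
  (forall C : R, 0 < C ->
     cvgn (series (fun k => C ^+ k * `|phi k| / (k`!%:R) ^+ 2))) ->
  forall s t : R, s \in `[a, b] -> t \in `[a, b] ->
    cvgn (fun N => KN phi gam sig a N s t) /\
    forall N : nat,
      `| Kphi phi gam sig a s t - KN phi gam sig a N s t |
      <= limn (fun M => \sum_(N.+1 <= k < M)
                 `|phi k| * (path_length gam a s * path_length sig a t) ^+ k
                 / (k`!%:R) ^+ 2).
Proof.
move=> _ _ _ bg bs phi_cvg s t /[!in_itv] /andP[as_ sb] /andP[at_ tb].
have C0 : 0 <= path_length gam a s * path_length sig a t.
  by rewrite mulr_ge0 ?(path_length_ge0 bg) ?(path_length_ge0 bs).
pose term k := phi k * sig_inner gam sig a k s t.
have term_le k : `|term k| <= `|phi k| *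
    (path_length gam a s * path_length sig a t) ^+ k / (k`!%:R) ^+ 2.
  by rewrite normrM -mulrA ler_wpM2l //; exact: sig_inner_le bg bs as_ sb at_ tb.
have [cvg_term tail_le] := series_dominated_tail term_le (cvgn_series_weight phi_cvg C0).
have KN_series N : KN phi gam sig a N s t = series term N.+1.
  by rewrite /KN /series /= big_mkord.
have cvg_KN : (fun N => KN phi gam sig a N s t) @ \oo --> limn (series term).
  by rewrite (eq_cvg _ _ KN_series) cvg_shiftS; exact: cvg_term.
split=> [|N]; first exact: cvgP cvg_KN.
by rewrite /Kphi (cvg_lim _ cvg_KN) // KN_series; exact: tail_le.
Qed.
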